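(* Let $\mathcal{E}[t_{\mathcal{E}}]$ be a locally convex space and let $\{\xi_n\}\subset\mathcal{E}$ be a Schauder basis of $\mathcal{E}[t_{\mathcal{E}}]$. Assume that there exists a one-to-one continuous linear map $T$ from $\mathcal{E}[t_{\mathcal{E}}]$ into some Hilbert space $\mathcal{K}[\|\cdot\|]$ such that $\{T\xi_n\}$ is an orthonormal basis of $\mathcal{K}$. Then there exists an inner product $\langle\cdot,\cdot\rangle_+$ on $\mathcal{E}\times\mathcal{E}$ such that the topology induced on $\mathcal{E}$ by the corresponding norm $\|\cdot\|_+$ is coarser than $t_{\mathcal{E}}$ and $\{\xi_n\}$ is an orthonormal basis with respect to $\langle\cdot,\cdot\rangle_+$.
   Context: A sequence $\{\xi_n\}$ in a locally convex space $\mathcal{E}[t_{\mathcal{E}}]$ is a topological basis if every $\phi\in\mathcal{E}$ can be written uniquely as $\phi=\sum_{n=1}^\infty c_n\xi_n$ with the series converging in $\mathcal{E}[t_{\mathcal{E}}]$; it is a Schauder basis if, in addition, the coefficient functionals $\phi\mapsto c_n(\phi)$ are $t_{\mathcal{E}}$-continuous. *)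

From mathcomp Require Import all_boot all_order all_algebra.
From mathcomp Require Import all_classical all_reals all_analysis.
From mathcomp Require Export complex.
Set Implicit Arguments.
Unset Strict Implicit.
Unset Printing Implicit Defensive.
Import Order.TTheory GRing.Theory Num.Theory.
Local Open Scope ring_scope.
Local Open Scope classical_set_scope.

Section InnerProduct.
Variable R : realType.
Variable V : lmodType R[i].

Definition inner_product (ip : V -> V -> R[i]) : Prop :=
  [/\ forall (a : R[i]) (x y z : V), ip (a *: x + y) z = a * ip x z + ip y z,
      forall x y : V, ip y x = (ip x y)^*,
      forall x : V, 0 <= ip x x
    & forall x : V, ip x x = 0 -> x = 0].

Definition ipnorm (ip : V -> V -> R[i]) (x : V) : R :=
  Num.sqrt (complex.Re (ip x x)).

Definition ip_cvg (ip : V -> V -> R[i]) (u : nat -> V) (l : V) : Prop :=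
  forall e : R, 0 < e -> exists N : nat, forall n : nat, (N <= n)%N ->
    ipnorm ip (u n - l) < e.

Definition ip_complete (ip : V -> V -> R[i]) : Prop :=
  forall u : nat -> V,
    (forall e : R, 0 < e -> exists N : nat, forall m n : nat,
        (N <= m)%N -> (N <= n)%N -> ipnorm ip (u m - u n) < e) ->
    exists l : V, ip_cvg ip u l.

Definition orthonormal_basis (ip : V -> V -> R[i]) (e : nat -> V) : Prop :=
  (forall m n : nat, ip (e m) (e n) = (m == n)%:R) /\
  (forall x : V, ip_cvg ip (fun N => \sum_(k < N) ip x (e k) *: e k) x).

End InnerProduct.

Section Schauder.
Variable R : realType.
Variable E : tvsType R[i].

(* Schauder basis of the locally convex space E: every phi has a unique
   expansion phi = sum_n c_n xi_n converging in E (the coefficients being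
   coef n phi), and each coefficient functional coef n is continuous. *)
Definition schauder_basis (xi : nat -> E) : Prop :=
  exists coef : nat -> E -> R[i],
    (forall (phi : E) (c : nat -> R[i]),
        ((fun N => \sum_(k < N) c k *: xi k) @ \oo --> phi) <->
        c = (fun n => coef n phi)) /\
    (forall n : nat, continuous (coef n : E -> R[i]^o)).

End Schauder.

From mathcomp Require Import all_boot all_order all_algebra.
From mathcomp Require Import all_classical all_reals all_analysis.
From mathcomp Require Import complex.
Import Order.TTheory GRing.Theory Num.Theory.
Local Open Scope ring_scope.
Local Open Scope classical_set_scope.

(* Pull the inner product of K back along T: <x, y>_+ := <T x, T y>.  It is
   definite because T is one-to-one, its norm is ||T x||, so continuity of T
   makes the norm topology coarser, and T maps the Fourier partial sums of x
   along (xi_n) onto those of T x along the orthonormal basis (T xi_n). *)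

Section Pullback.
Variable R : realType.
Variables V W : lmodType R[i].
Variable T : {linear V -> W}.
Variable ip : W -> W -> R[i].

Definition pullback_ip (x y : V) : R[i] := ip (T x) (T y).

Lemma ipnorm_pullback (x : V) : ipnorm pullback_ip x = ipnorm ip (T x).
Proof. by []. Qed.

Lemma ipnorm_pullbackB (x y : V) :
  ipnorm pullback_ip (y - x) = ipnorm ip (T y - T x).
Proof. by rewrite ipnorm_pullback linearB. Qed.

Lemma inner_product_pullback :
  injective T -> inner_product ip -> inner_product pullback_ip.
Proof.
move=> Tinj [ipD ipC ip_ge0 ip_eq0]; split=> [a x y z|x y|x|x].
- by rewrite /pullback_ip linearD linearZ ipD.
- exact: ipC.
- exact: ip_ge0.
- by move=> /ip_eq0 Tx0; apply: Tinj; rewrite Tx0 linear0.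
Qed.

Lemma ip_cvg_pullback (u : nat -> V) (l : V) :
  ip_cvg ip (T \o u) (T l) -> ip_cvg pullback_ip u l.
Proof.
move=> Tu_cvg e e_gt0; have [N uN] := Tu_cvg e e_gt0.
by exists N => n Nn; rewrite ipnorm_pullbackB; exact: uN.
Qed.

Lemma orthonormal_basis_pullback (e : nat -> V) :
  orthonormal_basis ip (T \o e) -> orthonormal_basis pullback_ip e.
Proof.
move=> [e_on e_fourier]; split=> [//|x]; apply: ip_cvg_pullback.
suff -> : T \o (fun N => \sum_(k < N) pullback_ip x (e k) *: e k) =
          (fun N => \sum_(k < N) ip (T x) (T (e k)) *: T (e k)).
  exact: e_fourier.
by apply/funext => N /=; rewrite linear_sum; apply: eq_bigr => k _; rewrite linearZ.
Qed.

End Pullback.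

Arguments pullback_ip {R V W} T ip.

Theorem proposition2p5 (R : realType) (E : tvsType R[i]) (xi : nat -> E)
  (H : lmodType R[i]) (ipH : H -> H -> R[i])
  (ipH_inner : inner_product ipH) (H_complete : ip_complete ipH)
  (T : {linear E -> H}) :
  schauder_basis xi ->
  injective T ->
  (forall (x : E) (e : R), 0 < e ->
     \forall y \near x, ipnorm ipH (T y - T x) < e) ->
  orthonormal_basis ipH (fun n => T (xi n)) ->
  exists ip : E -> E -> R[i],
    [/\ inner_product ip,
        (forall (x : E) (e : R), 0 < e ->
           \forall y \near x, ipnorm ip (y - x) < e)
      & orthonormal_basis ip xi].
Proof.
move=> _ Tinj T_cont Txi_onb.
exists (pullback_ip T ipH); split.
- exact: inner_product_pullback.
- move=> x e e_gt0; apply: filterS (T_cont x e e_gt0) => y.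
  by rewrite ipnorm_pullbackB.
- exact: orthonormal_basis_pullback.
Qed.
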